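(* Let $\mathfrak n$ be a 2-step nilpotent real Lie algebra with inner product $\langle\cdot,\cdot\rangle$, center $\mathfrak z$, $\mathfrak v=\mathfrak z^\perp$, commutator $C(\mathfrak n)=[\mathfrak n,\mathfrak n]$, and maps $j_Z$ as in the context. Let $F:\mathfrak n\to\mathfrak n$ be linear and write $F=F_1+F_2$ uniquely with $F_1(\mathfrak v)\subseteq\mathfrak v$, $F_1(\mathfrak z)\subseteq\mathfrak z$, $F_2(\mathfrak v)\subseteq\mathfrak z$, $F_2(\mathfrak z)\subseteq\mathfrak v$. Then: (i) a skew-symmetric $F$ gives rise to a closed 2-form $\omega(X,Y)=\langle F(X),Y\rangle$ if and only if $F_1$ and $F_2$ are skew-symmetric, $F_1(Z)$ is orthogonal to $C(\mathfrak n)$ for all $Z\in\mathfrak z$, and $\langle F_2(U),[V,W]\rangle+\langle F_2(V),[W,U]\rangle+\langle F_2(W),[U,V]\rangle=0$ for all $U,V,W\in\mathfrak v$; (ii) exact left-invariant 2-forms on $\mathfrak n$ (i.e. $d\eta$ for $\eta\in\mathfrak n^*$) are in one-to-one correspondence with the skew-symmetric maps $j_{\tilde Z}$ with $\tilde Z\in C(\mathfrak n)$ (the exact 2-form $d\ell_{\tilde Z}$, $\ell_{\tilde Z}=\langle\tilde Z,\cdot\rangle$, having Lorentz force $j_{\tilde Z}$ on $\mathfrak v$, extended by zero on $\mathfrak z$).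
   Context: A real Lie algebra is 2-step nilpotent if $[[U,V],W]=0$ for all $U,V,W$. For $Z\in\mathfrak z$, $j_Z:\mathfrak v\to\mathfrak v$ is defined by $\langle j_ZV,W\rangle=\langle Z,[V,W]\rangle$ for $V,W\in\mathfrak v$. For a left-invariant 1-form $\eta$, $d\eta(U,V)=-\eta([U,V])$ up to the sign convention; here $d\ell_{\tilde Z}(U,V)=\langle\tilde Z,[U,V]\rangle$. A 2-form $\omega$ on $\mathfrak n$ is closed iff $\omega([U,V],W)+\omega([V,W],U)+\omega([W,U],V)=0$ for all $U,V,W\in\mathfrak n$. *)

(* A finite-dimensional real inner-product space is modelled
   (up to isometry) as 'rV[R]_n with the standard dot product, R : realType. *)
From HB Require Import structures.
From mathcomp Require Import all_boot all_order all_algebra.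
From mathcomp Require Import reals.
Set Implicit Arguments. Unset Strict Implicit. Unset Printing Implicit Defensive.
Import Order.TTheory GRing.Theory Num.Theory.
Local Open Scope ring_scope.

Section Defs.
Variables (R : realType) (n : nat).
Notation vec := 'rV[R]_n.

Definition ip (u v : vec) : R := (u *m v^T) 0 0.

Definition two_step_nilpotent_lie (br : vec -> vec -> vec) : Prop :=
  [/\ (forall (a : R) (x y z : vec), br (a *: x + y) z = a *: br x z + br y z),
      (forall (a : R) (x y z : vec), br z (a *: x + y) = a *: br z x + br z y),
      (forall x : vec, br x x = 0),
      (forall x y z : vec, br x (br y z) + br y (br z x) + br z (br x y) = 0)
    & (forall u v w : vec, br (br u v) w = 0)].

Definition in_center (br : vec -> vec -> vec) (x : vec) : Prop :=
  forall y, br x y = 0.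

Definition in_vpart (br : vec -> vec -> vec) (x : vec) : Prop :=
  forall z, in_center br z -> ip x z = 0.

Definition in_commutator (br : vec -> vec -> vec) (x : vec) : Prop :=
  exists (k : nat) (us vs : 'I_k -> vec), x = \sum_(i < k) br (us i) (vs i).

(* linear maps n -> n are matrices acting on the right: F(X) = X *m F *)
Definition skew_sym (F : 'M[R]_n) : Prop :=
  forall x y : vec, ip (x *m F) y = - ip x (y *m F).

Definition closed_form (br : vec -> vec -> vec) (om : vec -> vec -> R) : Prop :=
  forall u v w : vec,
    om (br u v) w + om (br v w) u + om (br w u) v = 0.

(* exterior derivative of the left-invariant 1-form eta (eta : n^*, given by a
   column vector: eta(X) = X *m eta), convention d eta(U,V) = eta([U,V]),
   so that d l_Z (U,V) = <Z,[U,V]>. *)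
Definition dform (br : vec -> vec -> vec) (eta : 'cV[R]_n) (u v : vec) : R :=
  (br u v *m eta) 0 0.

Definition ell (z : vec) : 'cV[R]_n := z^T.

(* j_Z : the matrix with <j_Z X, Y> = <Z,[X,Y]> for all X,Y (on v it is the
   map of the paper; it automatically vanishes on z, i.e. it is j_Z extended
   by zero). Entry (i,j) = <Z,[e_i,e_j]>. *)
Definition jmap (br : vec -> vec -> vec) (z : vec) : 'M[R]_n :=
  \matrix_(i < n, j < n) ip z (br (delta_mx 0 i) (delta_mx 0 j)).

End Defs.

(* Relative to n = z (+) v, F1 is the block-diagonal and F2 the off-diagonal
   part of F, so F1 and F2 inherit skewness from F block by block.  Since
   brackets are central and only see the v-components of their arguments, in
   the closedness sum  sum <F[U,V], W> = - sum <[U,V], F W>  only the terms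
   <[U_v,V_v], F1 W_z> and <[U_v,V_v], F2 W_v> survive; taking W central
   isolates the first kind.  For (ii), <[U,V], eta> only depends on the
   orthogonal projection of eta onto C(n), the span of the brackets, which
   gives the unique Z; then <Z,[X,Y]> = <j_Z X, Y> is the definition of j_Z. *)

From HB Require Import structures.
From mathcomp Require Import all_boot all_order all_algebra.
From mathcomp Require Import reals.
From mathcomp Require Import ring lra.
Set Implicit Arguments. Unset Strict Implicit. Unset Printing Implicit Defensive.
Import Order.TTheory GRing.Theory Num.Theory.
Local Open Scope ring_scope.

Section InnerProduct.
Variables (R : realType) (n : nat).
Implicit Types x y z : 'rV[R]_n.

Lemma ipC x y : ip x y = ip y x.
Proof. by rewrite /ip -[x *m _]trmxK trmx_mul trmxK mxE. Qed.

Lemma ipDl x y z : ip (x + y) z = ip x z + ip y z.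
Proof. by rewrite /ip mulmxDl mxE. Qed.

Lemma ipDr x y z : ip x (y + z) = ip x y + ip x z.
Proof. by rewrite ipC ipDl !(ipC x). Qed.

Lemma ipZr a x y : ip x (a *: y) = a * ip x y.
Proof. by rewrite /ip linearZ /= -scalemxAr mxE. Qed.

Lemma ipNr x y : ip x (- y) = - ip x y.
Proof. by rewrite -scaleN1r ipZr mulN1r. Qed.

Lemma ipBr x y z : ip x (y - z) = ip x y - ip x z.
Proof. by rewrite ipDr ipNr. Qed.

Lemma ip0l y : ip 0 y = 0.
Proof. by rewrite /ip mul0mx mxE. Qed.

Lemma ip0r x : ip x 0 = 0.
Proof. by rewrite ipC ip0l. Qed.

Lemma ip_sumr (I : finType) x (f : I -> 'rV[R]_n) :
  ip x (\sum_i f i) = \sum_i ip x (f i).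
Proof. by elim/big_rec2: _ => [|i _ s _ <-]; rewrite ?ip0r ?ipDr. Qed.

Lemma ip_mulmxr m x (y : 'rV[R]_m) (A : 'M[R]_(m, n)) :
  ip x (y *m A) = ip (x *m A^T) y.
Proof. by rewrite /ip trmx_mul mulmxA. Qed.

Lemma ipxx_eq0 x : (ip x x == 0) = (x == 0).
Proof.
apply/eqP/eqP => [|->]; last exact: ip0l.
have sq_ge0 j : true -> 0 <= x 0 j * x^T j 0 by rewrite mxE -expr2 sqr_ge0.
rewrite /ip mxE => /(psumr_eq0P sq_ge0) x0; apply/rowP => j.
by have /eqP := x0 j isT; rewrite mxE !mxE -expr2 sqrf_eq0 => /eqP.
Qed.

End InnerProduct.

(* The Gram matrix [A *m A^T] has the rank of [A], hence the row space of
   [A^T]; so [x *m A^T] is some [w *m A *m A^T], and [w *m A] is the projection. *)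
Lemma orth_proj_exists (R : realType) m n (A : 'M[R]_(m, n)) (x : 'rV[R]_n) :
  exists2 y, (y <= A)%MS & forall c, (c <= A)%MS -> ip (x - y) c = 0.
Proof.
have rank_gram : \rank (A *m A^T) = \rank A.
  apply/mxrank_injP; rewrite -submx0; apply/row_subP => i.
  set u := row i _; have /andP[/submxP[v uE] /sub_kermxP uA] :
    (u <= A)%MS && (u <= kermx A^T)%MS by rewrite -sub_capmx row_sub.
  suff /eqP -> : u == 0 by exact: sub0mx.
  by rewrite -ipxx_eq0 {2}uE ip_mulmxr uA ip0l.
have /submxP[w xE] : (x *m A^T <= A *m A^T)%MS.
  have /geq_leqif := mxrank_leqif_eq (submxMl A A^T).
  by rewrite rank_gram mxrank_tr leqnn => /esym/eqmxP ->; exact: submxMl.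
exists (w *m A) => [|c /submxP[d ->]]; first exact: submxMl.
by rewrite ip_mulmxr mulmxBl xE mulmxA subrr ip0l.
Qed.

Section Bracket.
Variables (R : realType) (n : nat) (br : 'rV[R]_n -> 'rV[R]_n -> 'rV[R]_n).
Implicit Types x y z u v c d : 'rV[R]_n.
Hypotheses (brDZl : forall a x y z, br (a *: x + y) z = a *: br x z + br y z)
           (brDZr : forall a x y z, br z (a *: x + y) = a *: br z x + br z y).

Lemma brDl x y z : br (x + y) z = br x z + br y z.
Proof. by have := brDZl 1 x y z; rewrite !scale1r. Qed.

Lemma brDr x y z : br z (x + y) = br z x + br z y.
Proof. by have := brDZr 1 x y z; rewrite !scale1r. Qed.

Lemma br0l z : br 0 z = 0.
Proof. by apply: (addIr (br 0 z)); rewrite -brDl !add0r. Qed.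

Lemma br0r z : br z 0 = 0.
Proof. by apply: (addIr (br z 0)); rewrite -brDr !add0r. Qed.

Lemma brZl a x z : br (a *: x) z = a *: br x z.
Proof. by rewrite -[a *: x]addr0 brDZl br0l addr0. Qed.

Lemma brZr a x z : br z (a *: x) = a *: br z x.
Proof. by rewrite -[a *: x]addr0 brDZr br0r addr0. Qed.

Lemma br_suml (I : finType) (f : I -> 'rV[R]_n) z :
  br (\sum_i f i) z = \sum_i br (f i) z.
Proof. by elim/big_rec2: _ => [|i _ s _ <-]; rewrite ?br0l ?brDl. Qed.

Lemma br_sumr (I : finType) (f : I -> 'rV[R]_n) z :
  br z (\sum_i f i) = \sum_i br z (f i).
Proof. by elim/big_rec2: _ => [|i _ s _ <-]; rewrite ?br0r ?brDr. Qed.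

Lemma br_expand u v : br u v = \sum_i \sum_j (u 0 i * v 0 j) *: br 'e_i 'e_j.
Proof.
rewrite {1}[u]row_sum_delta br_suml; apply: eq_bigr => i _.
rewrite {1}[v]row_sum_delta br_sumr; apply: eq_bigr => j _.
by rewrite brZl brZr scalerA mulrC.
Qed.

Definition br_mx y : 'M[R]_n := \matrix_i br 'e_i y.

Lemma mul_br_mx x y : x *m br_mx y = br x y.
Proof.
rewrite mulmx_sum_row {2}[x]row_sum_delta br_suml.
by apply: eq_bigr => i _; rewrite rowK brZl.
Qed.

Definition center_mx : 'M[R]_n := (\bigcap_(j < n) kermx (br_mx 'e_j))%MS.

Lemma centerP x : in_center br x <-> (x <= center_mx)%MS.
Proof.
split=> [xZ | /sub_bigcapmxP xZ y].
  by apply/sub_bigcapmxP => j _; apply/sub_kermxP; rewrite mul_br_mx xZ.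
rewrite [y]row_sum_delta br_sumr big1 // => j _.
by rewrite brZr -mul_br_mx (sub_kermxP (xZ j isT)) scaler0.
Qed.

Lemma center_vpart_decomp x :
  exists xz xv, [/\ x = xz + xv, in_center br xz & in_vpart br xv].
Proof.
have [y /centerP yZ orth] := orth_proj_exists center_mx x.
exists y, (x - y); split=> // [|c /centerP]; first by rewrite addrC subrK.
exact: orth.
Qed.

Definition commutator_mx : 'M[R]_(#|{: 'I_n * 'I_n}|, n) :=
  \matrix_k br 'e_(enum_val k).1 'e_(enum_val k).2.

Lemma br_sub_commutator u v : (br u v <= commutator_mx)%MS.
Proof.
rewrite br_expand; apply: summx_sub => i _; apply: summx_sub => j _.
by apply/scalemx_sub/(eq_row_sub (enum_rank (i, j))); rewrite rowK enum_rankK.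
Qed.

Lemma commutatorP x : in_commutator br x <-> (x <= commutator_mx)%MS.
Proof.
split=> [[k [us [vs ->]]] | /submxP[w ->]].
  by apply: summx_sub => i _; apply: br_sub_commutator.
exists #|{: 'I_n * 'I_n}|, (fun k => w 0 k *: 'e_(enum_val k).1).
exists (fun k => 'e_(enum_val k).2).
by rewrite mulmx_sum_row; apply: eq_bigr => k _; rewrite rowK brZl.
Qed.

Lemma ip_commutator_eq0 d c : in_commutator br c ->
  (forall u v, ip d (br u v) = 0) -> ip d c = 0.
Proof. by move=> [k [us [vs ->]]] d_orth; rewrite ip_sumr big1. Qed.

Lemma commutator_ip_br_inj z1 z2 : in_commutator br z1 -> in_commutator br z2 ->
  (forall u v, ip z1 (br u v) = ip z2 (br u v)) -> z1 = z2.
Proof.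
move=> /commutatorP z1C /commutatorP z2C z12.
apply/eqP; rewrite -subr_eq0 -ipxx_eq0; apply/eqP/ip_commutator_eq0 => [|u v].
  by apply/commutatorP; rewrite -scaleN1r addmx_sub ?scalemx_sub.
by rewrite ipC ipBr !(ipC (br u v)) z12 subrr.
Qed.

Lemma dformE eta u v : dform br eta u v = ip (br u v) eta^T.
Proof. by rewrite /ip trmxK. Qed.

Lemma dform_ell z u v : dform br (ell z) u v = ip (br u v) z.
Proof. by []. Qed.

Lemma dform_ell_exists_unique eta : exists! z, in_commutator br z /\
  (forall u v, dform br eta u v = dform br (ell z) u v).
Proof.
have [y yC orth] := orth_proj_exists commutator_mx eta^T.
have dform_y u v : dform br eta u v = dform br (ell y) u v.
  apply/eqP; rewrite dformE dform_ell -subr_eq0 -ipBr ipC.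
  by rewrite orth ?br_sub_commutator.
exists y; split=> [|z [zC dform_z]]; first by split=> //; apply/commutatorP.
apply: commutator_ip_br_inj => // [|u v]; first exact/commutatorP.
by rewrite !(ipC _ (br u v)) -!dform_ell -dform_y dform_z.
Qed.

Lemma ip_jmap z u v : ip (u *m jmap br z) v = ip z (br u v).
Proof.
rewrite br_expand ip_sumr.
transitivity (\sum_j \sum_i u 0 i * jmap br z i j * v 0 j).
  by rewrite /ip mxE; apply: eq_bigr => j _; rewrite !mxE big_distrl.
rewrite exchange_big; apply: eq_bigr => i _; rewrite ip_sumr.
by apply: eq_bigr => j _; rewrite ipZr !mxE mulrAC.
Qed.

Lemma jmap_center z x : in_center br x -> x *m jmap br z = 0.
Proof. by move=> xZ; apply/eqP; rewrite -ipxx_eq0 ip_jmap xZ ip0r. Qed.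

Lemma jmap_inj z1 z2 : in_commutator br z1 -> in_commutator br z2 ->
  jmap br z1 = jmap br z2 -> z1 = z2.
Proof.
by move=> z1C z2C j12; apply: commutator_ip_br_inj => // u v; rewrite -!ip_jmap j12.
Qed.

Hypothesis brxx : forall x, br x x = 0.

Lemma br_antisym x y : br x y = - br y x.
Proof.
apply/eqP; rewrite -subr_eq0 opprK.
by have := brxx (x + y); rewrite brDl !brDr !brxx add0r addr0 => ->.
Qed.

Lemma dform_ell_jmap z u v : dform br (ell z) u v = ip (u *m jmap br z) v.
Proof. by rewrite dform_ell ipC ip_jmap. Qed.

Lemma jmap_skew z : skew_sym (jmap br z).
Proof. by move=> x y; rewrite ip_jmap (ipC x) ip_jmap br_antisym ipNr. Qed.

Lemma jmap_vpart z x : in_vpart br (x *m jmap br z).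
Proof. by move=> c cZ; rewrite ip_jmap br_antisym cZ oppr0 ip0r. Qed.

Lemma br_drop_center uz uv vz vv : in_center br uz -> in_center br vz ->
  br (uz + uv) (vz + vv) = br uv vv.
Proof. by move=> uZ vZ; rewrite brDl uZ add0r brDr br_antisym vZ oppr0 add0r. Qed.

Definition in_part (b : bool) x := if b then in_center br x else in_vpart br x.

Lemma ip_part_negb b x y : in_part b x -> in_part (~~ b) y -> ip x y = 0.
Proof. by case: b => /= [xZ yV | xV yZ]; [rewrite ipC; apply: yV | apply: xV]. Qed.

Lemma ip_negb_part b x y : in_part (~~ b) x -> in_part b y -> ip x y = 0.
Proof. by rewrite ipC => xP yP; apply: ip_part_negb yP xP. Qed.

Lemma skew_sym_parts (G : 'M[R]_n) :
  (forall (b c : bool) x y, in_part b x -> in_part c y ->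
     ip (x *m G) y = - ip x (y *m G)) ->
  skew_sym G.
Proof.
move=> G_skew x y.
have [xz [xv [-> xZ xV]]] := center_vpart_decomp x.
have [yz [yv [-> yZ yV]]] := center_vpart_decomp y.
rewrite !mulmxDl !ipDl !ipDr (G_skew true true xz yz) ?(G_skew true false xz yv)
  ?(G_skew false true xv yz) ?(G_skew false false xv yv) //.
ring.
Qed.

Hypothesis brbr : forall u v w, br (br u v) w = 0.

Section Blocks.
Variables F F1 F2 : 'M[R]_n.
Hypotheses (F_skew : skew_sym F) (F_split : F = F1 + F2)
  (F1_vpart : forall x, in_vpart br x -> in_vpart br (x *m F1))
  (F1_center : forall x, in_center br x -> in_center br (x *m F1))
  (F2_vpart : forall x, in_vpart br x -> in_center br (x *m F2))
  (F2_center : forall x, in_center br x -> in_vpart br (x *m F2)).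

Let F1_part b x : in_part b x -> in_part b (x *m F1).
Proof. by case: b; [apply: F1_center | apply: F1_vpart]. Qed.

Let F2_part b x : in_part b x -> in_part (~~ b) (x *m F2).
Proof. by case: b; [apply: F2_center | apply: F2_vpart]. Qed.

Let mulmxF x : x *m F = x *m F1 + x *m F2.
Proof. by rewrite F_split mulmxDr. Qed.

Lemma skew_sym_F1 : skew_sym F1.
Proof.
apply: skew_sym_parts => b c x y xP.
have [-> yP | -> yP] : c = b \/ c = ~~ b by case: b c {xP} => [] []; auto.
  have := F_skew x y; rewrite !mulmxF ipDl ipDr.
  by rewrite (ip_negb_part (F2_part xP) yP) (ip_part_negb xP (F2_part yP)) !addr0.
by rewrite (ip_part_negb (F1_part xP) yP) (ip_part_negb xP (F1_part yP)) oppr0.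
Qed.

Lemma skew_sym_F2 : skew_sym F2.
Proof.
apply: skew_sym_parts => b c x y xP.
have [-> yP | -> yP] : c = b \/ c = ~~ b by case: b c {xP} => [] []; auto.
  by rewrite (ip_negb_part (F2_part xP) yP) (ip_part_negb xP (F2_part yP)) oppr0.
have := F_skew x y; rewrite !mulmxF ipDl ipDr.
by rewrite (ip_part_negb (F1_part xP) yP) (ip_part_negb xP (F1_part yP)) !add0r.
Qed.

Lemma ip_br_center_mulmxF u v z : in_center br z ->
  ip (br u v) (z *m F) = ip (br u v) (z *m F1).
Proof.
by move=> zZ; rewrite mulmxF ipDr (ipC _ (z *m F2)) (F2_center zZ (brbr u v)) addr0.
Qed.

Lemma ip_br_vpart_mulmxF u v y : in_vpart br y ->
  ip (br u v) (y *m F) = ip (br u v) (y *m F2).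
Proof.
by move=> yV; rewrite mulmxF ipDr (ipC _ (y *m F1)) (F1_vpart yV (brbr u v)) add0r.
Qed.

Lemma closed_form_F1_center : closed_form br (fun x y => ip (x *m F) y) ->
  forall z, in_center br z -> forall u v, ip (z *m F1) (br u v) = 0.
Proof.
move=> F_closed z zZ u v; apply/eqP.
rewrite ipC -oppr_eq0 -ip_br_center_mulmxF // -F_skew.
have := F_closed u v z.
by rewrite (br_antisym v z) !zZ oppr0 !mul0mx !ip0l !addr0 => ->.
Qed.

Lemma closed_form_F2_cyclic : closed_form br (fun x y => ip (x *m F) y) ->
  forall u v w, in_vpart br u -> in_vpart br v -> in_vpart br w ->
    ip (u *m F2) (br v w) + ip (v *m F2) (br w u) + ip (w *m F2) (br u v) = 0.
Proof.
move=> F_closed u v w uV vV wV; have := F_closed u v w.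
rewrite !F_skew !ip_br_vpart_mulmxF // !(ipC (br _ _)).
lra.
Qed.

Lemma closed_form_of_blocks :
  (forall z, in_center br z -> forall u v, ip (z *m F1) (br u v) = 0) ->
  (forall u v w, in_vpart br u -> in_vpart br v -> in_vpart br w ->
     ip (u *m F2) (br v w) + ip (v *m F2) (br w u) + ip (w *m F2) (br u v) = 0) ->
  closed_form br (fun x y => ip (x *m F) y).
Proof.
move=> F1_C F2_cyclic u v w /=.
have [uz [uv [-> uZ uV]]] := center_vpart_decomp u.
have [vz [vv [-> vZ vV]]] := center_vpart_decomp v.
have [wz [wv [-> wZ wV]]] := center_vpart_decomp w.
have omega_br a b xz xv : in_center br xz -> in_vpart br xv ->
    ip (br a b *m F) (xz + xv) = - ip (xv *m F2) (br a b).
  move=> xZ xV; rewrite F_skew mulmxDl ipDr ip_br_center_mulmxF //.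
  by rewrite ip_br_vpart_mulmxF // ipC F1_C // add0r ipC.
rewrite !omega_br // !br_drop_center //.
have := F2_cyclic _ _ _ uV vV wV.
lra.
Qed.

Lemma closed_form_iff_blocks :
  closed_form br (fun x y => ip (x *m F) y) <->
  [/\ skew_sym F1, skew_sym F2,
      (forall z, in_center br z -> forall u v, ip (z *m F1) (br u v) = 0)
    & (forall u v w, in_vpart br u -> in_vpart br v -> in_vpart br w ->
         ip (u *m F2) (br v w) + ip (v *m F2) (br w u)
         + ip (w *m F2) (br u v) = 0)].
Proof.
split=> [F_closed | [_ _]]; last exact: closed_form_of_blocks.
split; [exact: skew_sym_F1 | exact: skew_sym_F2 | exact: closed_form_F1_center | ].
exact: closed_form_F2_cyclic.
Qed.

End Blocks.

End Bracket.

Theorem mainTheorem3 (R : realType) (n : nat) (br : 'rV[R]_n -> 'rV[R]_n -> 'rV[R]_n)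
  (Hlie : two_step_nilpotent_lie br) :
  (* (i) *)
  (forall F F1 F2 : 'M[R]_n,
     skew_sym F -> F = F1 + F2 ->
     (forall x, in_vpart br x -> in_vpart br (x *m F1)) ->
     (forall x, in_center br x -> in_center br (x *m F1)) ->
     (forall x, in_vpart br x -> in_center br (x *m F2)) ->
     (forall x, in_center br x -> in_vpart br (x *m F2)) ->
     (closed_form br (fun x y => ip (x *m F) y) <->
      [/\ skew_sym F1, skew_sym F2,
          (forall z, in_center br z -> forall u v, ip (z *m F1) (br u v) = 0)
        & (forall u v w, in_vpart br u -> in_vpart br v -> in_vpart br w ->
             ip (u *m F2) (br v w) + ip (v *m F2) (br w u)
             + ip (w *m F2) (br u v) = 0)])) /\
  (* (ii) *)
  [/\ (* every exact 2-form d eta is d l_Z for a unique Z in C(n) *)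
      (forall eta : 'cV[R]_n,
         exists! z, in_commutator br z /\
           (forall u v, dform br eta u v = dform br (ell z) u v)),
      (* the Lorentz force of d l_Z is j_Z (on v, extended by zero on z),
         which is skew_sym-symmetric *)
      (forall z, in_commutator br z ->
         [/\ (forall u v, dform br (ell z) u v = ip (u *m jmap br z) v),
             skew_sym (jmap br z),
             (forall x, in_vpart br x -> in_vpart br (x *m jmap br z))
           & (forall x, in_center br x -> x *m jmap br z = 0)])
    & (* Z |-> j_Z is injective on C(n) *)
      (forall z1 z2, in_commutator br z1 -> in_commutator br z2 ->
         jmap br z1 = jmap br z2 -> z1 = z2)].
Proof.
have [brDZl brDZr brxx _ brbr] := Hlie.
split=> [F F1 F2 *|]; first exact: closed_form_iff_blocks.
split=> [eta | z _ | z1 z2]; [exact: dform_ell_exists_unique | | exact: jmap_inj].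
split=> [u v | | x _ | x]; first exact: dform_ell_jmap.
- exact: jmap_skew.
- exact: jmap_vpart.
- exact: jmap_center.
Qed.
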